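(* Let $X,\hat X$ be real matrices of the same size with singular value decompositions $X=U\Sigma V^T$ and $\hat X=\hat U\hat\Sigma\hat V^T$ (with $U,V,\hat U,\hat V$ having orthonormal columns and $\Sigma,\hat\Sigma$ square nonnegative diagonal). Assume $\|X\|<1$, $\|\hat X\|<1$ and $\|X\|^2+2\|\hat X-X\|<1$. Then $$\big\|U\Sigma(I-\Sigma^2)^{-1}V^T-\hat U\hat\Sigma(I-\hat\Sigma^2)^{-1}\hat V^T\big\|\le\frac{3\|X-\hat X\|}{(1-\|X\|^2-2\|\hat X-X\|)^2}.$$
   Context: $\|\cdot\|$ denotes the spectral norm. *)

From HB Require Import structures.
From mathcomp Require Import all_boot all_order all_algebra.
From mathcomp Require Import boolp classical_sets reals.
Set Implicit Arguments. Unset Strict Implicit. Unset Printing Implicit Defensive.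
Import Order.TTheory GRing.Theory Num.Theory.
Local Open Scope ring_scope.
Local Open Scope classical_set_scope.

Definition vnorm (R : realType) (n : nat) (x : 'cV[R]_n) : R :=
  Num.sqrt (\sum_(i < n) x i 0 ^+ 2).

Definition specnorm (R : realType) (m n : nat) (A : 'M[R]_(m, n)) : R :=
  sup [set vnorm (A *m x) | x in [set x : 'cV[R]_n | vnorm x <= 1]].

Definition is_svd (R : realType) (m n r : nat) (X : 'M[R]_(m, n))
  (U : 'M[R]_(m, r)) (S : 'M[R]_r) (V : 'M[R]_(n, r)) : Prop :=
  [/\ U^T *m U = 1%:M, V^T *m V = 1%:M, is_diag_mx S,
      (forall i, 0 <= S i i) & X = U *m S *m V^T].

From HB Require Import structures.
From mathcomp Require Import all_boot all_order all_algebra.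
From mathcomp Require Import boolp classical_sets reals.
From mathcomp Require Import ring lra.
Import Order.TTheory GRing.Theory Num.Theory.
Set Implicit Arguments. Unset Strict Implicit. Unset Printing Implicit Defensive.
Local Open Scope ring_scope.

(* An SVD X = U S V^T turns U S (1 - S^2)^-1 V^T into f(X) = X (1 - X^T X)^-1, so
   the claim is a perturbation bound for f.  With B_Z = (1 - Z^T Z)^-1, the identity
     f(X) - f(Y) = (X - Y) B_X + Y B_X (X^T X - Y^T Y) B_Y
   and |B_Z| <= 1 / (1 - |Z|^2), which follows from <v, (1 - Z^T Z) v> >= (1 - |Z|^2) |v|^2,
   give |f(X) - f(Y)| <= d / (1 - x^2) + y (x + y) d / ((1 - x^2) (1 - y^2)) for
   x = |X|, y = |Y|, d = |X - Y|.  As y <= x + d, both 1 - x^2 and 1 - y^2 are at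
   least c = 1 - x^2 - 2 d, so the two terms are at most d / c^2 and 2 d / c^2. *)

Section EuclideanNorm.
Variable R : realType.
Implicit Types (n : nat).

Definition dot n (x y : 'cV[R]_n) : R := (x^T *m y) 0 0.

Lemma dotE n (x y : 'cV[R]_n) : dot x y = \sum_(i < n) x i 0 * y i 0.
Proof. by rewrite /dot mxE; apply: eq_bigr => i _; rewrite mxE. Qed.

Lemma dotC n (x y : 'cV[R]_n) : dot x y = dot y x.
Proof. by rewrite !dotE; apply: eq_bigr => i _; rewrite mulrC. Qed.

Lemma dotDl n (x y z : 'cV[R]_n) : dot (x + y) z = dot x z + dot y z.
Proof. by rewrite /dot linearD mulmxDl mxE. Qed.

Lemma dotNl n (x z : 'cV[R]_n) : dot (- x) z = - dot x z.
Proof. by rewrite /dot linearN mulNmx mxE. Qed.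

Lemma dotZl n (a : R) (x z : 'cV[R]_n) : dot (a *: x) z = a * dot x z.
Proof. by rewrite /dot linearZ -scalemxAl mxE. Qed.

Lemma dotBl n (x y z : 'cV[R]_n) : dot (x - y) z = dot x z - dot y z.
Proof. by rewrite dotDl dotNl. Qed.

Lemma dotDr n (x y z : 'cV[R]_n) : dot z (x + y) = dot z x + dot z y.
Proof. by rewrite dotC dotDl !(dotC z). Qed.

Lemma dotBr n (x y z : 'cV[R]_n) : dot z (x - y) = dot z x - dot z y.
Proof. by rewrite dotC dotBl !(dotC z). Qed.

Lemma dotZr n (a : R) (x z : 'cV[R]_n) : dot z (a *: x) = a * dot z x.
Proof. by rewrite dotC dotZl dotC. Qed.

Lemma dot_mulmxl m n (A : 'M[R]_(m, n)) x y : dot (A *m x) y = dot x (A^T *m y).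
Proof. by rewrite /dot trmx_mul mulmxA. Qed.

Lemma dotxx_ge0 n (x : 'cV[R]_n) : 0 <= dot x x.
Proof. by rewrite dotE; apply: sumr_ge0 => i _; rewrite -expr2 sqr_ge0. Qed.

Lemma dotxx_eq0 n (x : 'cV[R]_n) : dot x x = 0 -> x = 0.
Proof.
rewrite dotE => /psumr_eq0P x0; apply/matrixP => i j; rewrite (ord1 j) mxE.
by apply/eqP; rewrite -sqrf_eq0 expr2 x0 // => k _; rewrite -expr2 sqr_ge0.
Qed.

Lemma vnorm_ge0 n (x : 'cV[R]_n) : 0 <= vnorm x.
Proof. exact: sqrtr_ge0. Qed.

Lemma vnorm_sqr n (x : 'cV[R]_n) : vnorm x ^+ 2 = dot x x.
Proof.
rewrite sqr_sqrtr ?dotE; last by apply: sumr_ge0 => i _; rewrite sqr_ge0.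
by apply: eq_bigr => i _; rewrite expr2.
Qed.

Lemma vnorm_eq0 n (x : 'cV[R]_n) : vnorm x = 0 -> x = 0.
Proof. by move=> x0; apply: dotxx_eq0; rewrite -vnorm_sqr x0 expr0n. Qed.

Lemma vnorm0 n : vnorm (0 : 'cV[R]_n) = 0.
Proof. by rewrite /vnorm big1 ?sqrtr0 // => i _; rewrite mxE expr0n. Qed.

Lemma vnorm_gt0 n (x : 'cV[R]_n) : vnorm x != 0 -> 0 < vnorm x.
Proof. by rewrite lt0r vnorm_ge0 andbT. Qed.

Lemma cauchy_schwarz n (x y : 'cV[R]_n) : dot x y <= vnorm x * vnorm y.
Proof.
have [/vnorm_eq0 ->|/vnorm_gt0 a_gt0] := eqVneq (vnorm x) 0.
  by rewrite dotE big1 ?vnorm0 ?mul0r // => i _; rewrite mxE mul0r.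
have [/vnorm_eq0 ->|/vnorm_gt0 b_gt0] := eqVneq (vnorm y) 0.
  by rewrite dotE big1 ?vnorm0 ?mulr0 // => i _; rewrite mxE mulr0.
(* expand [0 <= |b x - a y|^2] with [a = |x|], [b = |y|] *)
have := dotxx_ge0 (vnorm y *: x - vnorm x *: y).
rewrite !(dotBl, dotBr, dotZl, dotZr) -!vnorm_sqr (dotC y x).
have := mulr_gt0 a_gt0 b_gt0; nra.
Qed.

Lemma vnormD n (x y : 'cV[R]_n) : vnorm (x + y) <= vnorm x + vnorm y.
Proof.
rewrite -(@ler_pXn2r _ 2) ?nnegrE ?addr_ge0 ?vnorm_ge0 //.
rewrite vnorm_sqr !(dotDl, dotDr) (dotC y x) -!vnorm_sqr.
have := cauchy_schwarz x y; nra.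
Qed.

Lemma vnormZ n (a : R) (x : 'cV[R]_n) : vnorm (a *: x) = `|a| * vnorm x.
Proof.
apply/eqP; rewrite -(@eqrXn2 _ 2) ?mulr_ge0 ?vnorm_ge0 //.
by rewrite exprMn !vnorm_sqr dotZl dotZr mulrA real_normK ?num_real // expr2.
Qed.

Lemma vnormN n (x : 'cV[R]_n) : vnorm (- x) = vnorm x.
Proof. by rewrite -scaleN1r vnormZ normrN normr1 mul1r. Qed.

Lemma vnorm_sum n k (F : 'I_k -> 'cV[R]_n) :
  vnorm (\sum_(j < k) F j) <= \sum_(j < k) vnorm (F j).
Proof.
elim/big_ind2: _ => [|x1 a1 x2 a2 le1 le2|//]; first by rewrite vnorm0.
exact: le_trans (vnormD _ _) (lerD le1 le2).
Qed.

Lemma normr_coord_le n (x : 'cV[R]_n) (j : 'I_n) : `|x j 0| <= vnorm x.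
Proof.
rewrite -sqrtr_sqr ler_sqrt ?sumr_ge0 // => [|i _]; last exact: sqr_ge0.
by rewrite (bigD1 j) //= lerDl sumr_ge0 // => i _; rewrite sqr_ge0.
Qed.

Lemma vnorm_isometry m r (U : 'M[R]_(m, r)) (z : 'cV[R]_r) :
  U^T *m U = 1%:M -> vnorm (U *m z) = vnorm z.
Proof.
move=> UU; apply/eqP; rewrite -(@eqrXn2 _ 2) ?vnorm_ge0 //.
by rewrite !vnorm_sqr dot_mulmxl mulmxA UU mul1mx.
Qed.

End EuclideanNorm.

Section SpectralNorm.
Variables (R : realType) (m n : nat).
Implicit Types (A B : 'M[R]_(m, n)) (x : 'cV[R]_n).

Lemma has_sup_specnorm A :
  has_sup [set vnorm (A *m x) | x in [set x | vnorm x <= 1]]%classic.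
Proof.
split; first by exists (vnorm (A *m 0)), 0 => //=; rewrite vnorm0.
exists (\sum_(j < n) vnorm (col j A)) => _ [x /= x_le1 <-].
have -> : A *m x = \sum_(j < n) x j 0 *: col j A.
  apply/matrixP => i k; rewrite (ord1 k) !mxE summxE.
  by apply: eq_bigr => j _; rewrite !mxE mulrC.
apply: le_trans (vnorm_sum _) (ler_sum _ _) => j _.
rewrite vnormZ -[leRHS]mul1r ler_wpM2r ?vnorm_ge0 //.
exact: le_trans (normr_coord_le _ _) x_le1.
Qed.

Lemma specnorm_ub A x : vnorm x <= 1 -> vnorm (A *m x) <= specnorm A.
Proof. by move=> x_le1; apply: (sup_upper_bound (has_sup_specnorm A)); exists x. Qed.

Lemma specnorm_ge0 A : 0 <= specnorm A.
Proof. by rewrite -(vnorm0 R m) -(mulmx0 _ A) specnorm_ub // vnorm0. Qed.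

Lemma vnorm_mulmx_le A x : vnorm (A *m x) <= specnorm A * vnorm x.
Proof.
have [/vnorm_eq0 ->|/vnorm_gt0 x_gt0] := eqVneq (vnorm x) 0.
  by rewrite mulmx0 !vnorm0 mulr0.
have := @specnorm_ub A ((vnorm x)^-1 *: x).
rewrite -scalemxAr !vnormZ ger0_norm ?invr_ge0 ?vnorm_ge0 // mulVf ?gt_eqF //.
by rewrite ler_pdivrMl // mulrC => ->.
Qed.

Lemma specnorm_lub A (c : R) :
  0 <= c -> (forall x, vnorm (A *m x) <= c * vnorm x) -> specnorm A <= c.
Proof.
move=> c_ge0 Ac; apply: ge_sup.
  by exists (vnorm (A *m 0)), 0 => //=; rewrite vnorm0.
move=> _ [x /= x_le1 <-]; apply: le_trans (Ac x) _.
by rewrite -[leRHS]mulr1 ler_wpM2l.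
Qed.

Lemma specnormD A B : specnorm (A + B) <= specnorm A + specnorm B.
Proof.
apply: specnorm_lub => [|x]; first by rewrite addr_ge0 ?specnorm_ge0.
rewrite mulmxDl mulrDl; apply: le_trans (vnormD _ _) _.
by rewrite lerD ?vnorm_mulmx_le.
Qed.

Lemma specnormN A : specnorm (- A) = specnorm A.
Proof.
have le_opp B : specnorm (- B) <= specnorm B.
  apply: specnorm_lub => [|x]; first exact: specnorm_ge0.
  by rewrite mulNmx vnormN vnorm_mulmx_le.
by apply/eqP; rewrite eq_le le_opp -{1}(opprK A) le_opp.
Qed.

Lemma specnormB A B : specnorm (A - B) = specnorm (B - A).
Proof. by rewrite -specnormN opprB. Qed.

End SpectralNorm.

Lemma specnorm_mulmx_le (R : realType) (m n p : nat)
  (A : 'M[R]_(m, n)) (B : 'M[R]_(n, p)) :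
  specnorm (A *m B) <= specnorm A * specnorm B.
Proof.
apply: specnorm_lub => [|x]; first by rewrite mulr_ge0 ?specnorm_ge0.
rewrite -mulmxA -mulrA; apply: le_trans (vnorm_mulmx_le _ _) _.
by rewrite ler_wpM2l ?specnorm_ge0 ?vnorm_mulmx_le.
Qed.

Lemma specnorm_trmx_le (R : realType) (m n : nat) (A : 'M[R]_(m, n)) :
  specnorm A^T <= specnorm A.
Proof.
apply: specnorm_lub => [|y]; first exact: specnorm_ge0.
set z := A^T *m y.
have z_sqr : vnorm z ^+ 2 <= vnorm y * (specnorm A * vnorm z).
  rewrite vnorm_sqr {1}/z dot_mulmxl trmxK.
  apply: le_trans (cauchy_schwarz _ _) _.
  by rewrite ler_wpM2l ?vnorm_ge0 ?vnorm_mulmx_le.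
have [z0|/vnorm_gt0 z_gt0] := eqVneq (vnorm z) 0.
  by rewrite z0 mulr_ge0 ?specnorm_ge0 ?vnorm_ge0.
by rewrite -(ler_pM2r z_gt0) -expr2 (le_trans z_sqr) // mulrCA mulrA.
Qed.

Section BoundedBelow.
Variables (R : realType) (q : nat) (M : 'M[R]_q) (k : R).
Hypothesis k_gt0 : 0 < k.
Hypothesis M_lb : forall y, k * vnorm y <= vnorm (M *m y).

Lemma unitmx_of_vnorm_lb : M \in unitmx.
Proof.
rewrite -unitmx_tr -row_free_unit -kermx_eq0; apply/eqP/row_matrixP => i.
rewrite row0; set u := row i _.
have Mu : M *m u^T = 0 by rewrite -[M]trmxK -trmx_mul -row_mul mulmx_ker row0 trmx0.
have := M_lb u^T; rewrite Mu vnorm0 pmulr_rle0 // => u_le0.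
have /vnorm_eq0/(congr1 trmx) : vnorm u^T = 0 by apply/eqP; rewrite eq_le u_le0 vnorm_ge0.
by rewrite trmxK trmx0.
Qed.

Lemma specnorm_invmx_le : specnorm (invmx M) <= k^-1.
Proof.
apply: specnorm_lub => [|z]; first by rewrite invr_ge0 ltW.
have := M_lb (invmx M *m z).
rewrite mulmxA mulmxV ?unitmx_of_vnorm_lb // mul1mx => lb.
by rewrite mulrC ler_pdivlMr // mulrC.
Qed.

End BoundedBelow.

Lemma vnorm_lb_of_dot_lb (R : realType) (q : nat) (M : 'M[R]_q) (k : R) y :
  k * vnorm y ^+ 2 <= dot y (M *m y) -> k * vnorm y <= vnorm (M *m y).
Proof.
have [->|/vnorm_gt0 y_gt0 lb] := eqVneq (vnorm y) 0; first by rewrite mulr0 vnorm_ge0.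
rewrite -(ler_pM2l y_gt0) mulrCA -expr2.
exact: le_trans lb (cauchy_schwarz _ _).
Qed.

Section OneSubGram.
Variables (R : realType) (p q : nat) (C : 'M[R]_(p, q)).

Lemma vnorm_1_sub_gram_ge y :
  (1 - specnorm C ^+ 2) * vnorm y <= vnorm ((1%:M - C^T *m C) *m y).
Proof.
apply: vnorm_lb_of_dot_lb.
rewrite mulmxBl mul1mx dotBr -mulmxA -dot_mulmxl -!vnorm_sqr mulrBl mul1r.
rewrite lerD2l lerN2 -exprMn.
by apply: lerXn2r; rewrite ?nnegrE ?mulr_ge0 ?specnorm_ge0 ?vnorm_ge0 ?vnorm_mulmx_le.
Qed.

Hypothesis C_lt1 : specnorm C < 1.

Lemma one_sub_specnorm_sqr_gt0 : 0 < 1 - specnorm C ^+ 2.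
Proof. by rewrite subr_gt0 expr_lt1 ?specnorm_ge0. Qed.

Lemma unitmx_1_sub_gram : 1%:M - C^T *m C \in unitmx.
Proof. exact: unitmx_of_vnorm_lb one_sub_specnorm_sqr_gt0 vnorm_1_sub_gram_ge. Qed.

Lemma specnorm_invmx_1_sub_gram :
  specnorm (invmx (1%:M - C^T *m C)) <= (1 - specnorm C ^+ 2)^-1.
Proof. exact: specnorm_invmx_le one_sub_specnorm_sqr_gt0 vnorm_1_sub_gram_ge. Qed.

End OneSubGram.

Section ResolventIdentities.
Variable R : comUnitRingType.

Lemma invmxB q (A B : 'M[R]_q) : A \in unitmx -> B \in unitmx ->
  invmx A - invmx B = invmx A *m (B - A) *m invmx B.
Proof.
move=> A_unit B_unit.
by rewrite mulmxBr mulmxBl mulVmx // mul1mx -mulmxA mulmxV // mulmx1.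
Qed.

Lemma gramB p q (C D : 'M[R]_(p, q)) :
  C^T *m C - D^T *m D = C^T *m (C - D) + (C - D)^T *m D.
Proof. by rewrite [(C - D)^T]linearB /= mulmxBr mulmxBl addrA subrK. Qed.

End ResolventIdentities.

Section SingularValueTransform.
Variables (R : realType) (m n : nat).
Implicit Types X Y : 'M[R]_(m, n).

(* For [X = U S V^T] this applies [s |-> s / (1 - s^2)] to the singular values. *)
Definition sv_transform X : 'M[R]_(m, n) := X *m invmx (1%:M - X^T *m X).

Lemma svd_sv_transform r X (U : 'M[R]_(m, r)) (S : 'M[R]_r) (V : 'M[R]_(n, r)) :
  U^T *m U = 1%:M -> V^T *m V = 1%:M -> S^T = S -> X = U *m S *m V^T ->
  specnorm X < 1 -> U *m S *m invmx (1%:M - S *m S) *m V^T = sv_transform X.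
Proof.
move=> UU VV S_sym defX X_lt1.
have S_le_X : specnorm S <= specnorm X.
  apply: specnorm_lub => [|y]; first exact: specnorm_ge0.
  rewrite -(vnorm_isometry _ UU) -(vnorm_isometry y VV) mulmxA.
  have -> : U *m S = X *m V by rewrite defX -!mulmxA VV mulmx1.
  by rewrite -mulmxA vnorm_mulmx_le.
have SS_unit : 1%:M - S *m S \in unitmx.
  by rewrite -{1}S_sym unitmx_1_sub_gram // (le_lt_trans S_le_X).
apply: (canRL (mulmxK (unitmx_1_sub_gram X_lt1))).
have VtA : V^T *m (1%:M - X^T *m X) = (1%:M - S *m S) *m V^T.
  rewrite defX !trmx_mul trmxK S_sym mulmxBr mulmxBl mulmx1 mul1mx !mulmxA VV.
  by rewrite mul1mx -[S *m U^T *m U]mulmxA UU mulmx1.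
rewrite -[_ *m V^T *m _]mulmxA VtA mulmxA -[U *m S *m _ *m _]mulmxA.
by rewrite mulVmx // mulmx1 defX.
Qed.

Lemma sv_transformB X Y : specnorm X < 1 -> specnorm Y < 1 ->
  let BX := invmx (1%:M - X^T *m X) in let BY := invmx (1%:M - Y^T *m Y) in
  sv_transform X - sv_transform Y
    = (X - Y) *m BX + Y *m (BX *m (X^T *m X - Y^T *m Y) *m BY).
Proof.
move=> X_lt1 Y_lt1 BX BY.
have -> : X^T *m X - Y^T *m Y = (1%:M - Y^T *m Y) - (1%:M - X^T *m X).
  by rewrite opprB [RHS]addrC addrA subrK.
by rewrite -invmxB ?unitmx_1_sub_gram // mulmxBl mulmxBr addrA subrK.
Qed.

End SingularValueTransform.

Lemma specnorm_gramB (R : realType) p q (C D : 'M[R]_(p, q)) :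
  specnorm (C^T *m C - D^T *m D) <= (specnorm C + specnorm D) * specnorm (C - D).
Proof.
rewrite gramB mulrDl [specnorm D * _]mulrC.
apply: le_trans (specnormD _ _) (lerD _ _); apply: le_trans (specnorm_mulmx_le _ _) _.
  by rewrite ler_wpM2r ?specnorm_ge0 ?specnorm_trmx_le.
by rewrite ler_wpM2r ?specnorm_ge0 ?specnorm_trmx_le.
Qed.

Lemma specnorm_sv_transformB (R : realType) m n (X Y : 'M[R]_(m, n)) :
  specnorm X < 1 -> specnorm Y < 1 ->
  specnorm (sv_transform X - sv_transform Y)
  <= specnorm (X - Y) / (1 - specnorm X ^+ 2)
     + specnorm Y * (specnorm X + specnorm Y) * specnorm (X - Y)
       / ((1 - specnorm X ^+ 2) * (1 - specnorm Y ^+ 2)).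
Proof.
move=> X_lt1 Y_lt1; rewrite sv_transformB //.
apply: le_trans (specnormD _ _) (lerD _ _).
  apply: le_trans (specnorm_mulmx_le _ _) _.
  by rewrite ler_wpM2l ?specnorm_ge0 ?specnorm_invmx_1_sub_gram.
have -> : specnorm Y * (specnorm X + specnorm Y) * specnorm (X - Y)
    / ((1 - specnorm X ^+ 2) * (1 - specnorm Y ^+ 2))
  = specnorm Y * ((1 - specnorm X ^+ 2)^-1
      * ((specnorm X + specnorm Y) * specnorm (X - Y)) * (1 - specnorm Y ^+ 2)^-1).
  by rewrite invfM; ring.
apply: le_trans (specnorm_mulmx_le _ _) _; rewrite ler_wpM2l ?specnorm_ge0 //.
apply: le_trans (specnorm_mulmx_le _ _) _.
apply: ler_pM; rewrite ?specnorm_ge0 ?specnorm_invmx_1_sub_gram //.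
apply: le_trans (specnorm_mulmx_le _ _) _.
by apply: ler_pM; rewrite ?specnorm_ge0 ?specnorm_invmx_1_sub_gram ?specnorm_gramB.
Qed.

Lemma perturbation_bound_arith (R : realFieldType) (x y d : R) :
  0 <= x -> 0 <= y -> y < 1 -> 0 <= d -> y <= x + d -> 0 < 1 - x ^+ 2 - 2 * d ->
  d / (1 - x ^+ 2) + y * (x + y) * d / ((1 - x ^+ 2) * (1 - y ^+ 2))
  <= 3 * d / (1 - x ^+ 2 - 2 * d) ^+ 2.
Proof.
move=> x_ge0 y_ge0 y_lt1 d_ge0 y_le c_gt0.
set c := 1 - x ^+ 2 - 2 * d in c_gt0 *.
have c_le_x : c <= 1 - x ^+ 2 by rewrite /c; lra.
(* [y^2 <= y (x + d) <= (x^2 + y^2) / 2 + d] *)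
have c_le_y : c <= 1 - y ^+ 2.
  have : 0 <= y * (x + d - y) by rewrite mulr_ge0 // subr_ge0.
  have : 0 <= d * (1 - y) by rewrite mulr_ge0 // subr_ge0 ltW.
  have := sqr_ge0 (x - y); rewrite /c; nra.
have c2_gt0 : 0 < c ^+ 2 by rewrite exprn_gt0.
have c2_le_c : c ^+ 2 <= c by rewrite expr2 ger_pMl // /c; nra.
have ax_gt0 : 0 < 1 - x ^+ 2 := lt_le_trans c_gt0 c_le_x.
have ay_gt0 : 0 < 1 - y ^+ 2 := lt_le_trans c_gt0 c_le_y.
have -> : 3 * d / c ^+ 2 = d / c ^+ 2 + 2 * d / c ^+ 2 by ring.
apply: lerD.
  by rewrite ler_wpM2l // lef_pV2 ?posrE // (le_trans c2_le_c c_le_x).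
apply: ler_pM.
- by rewrite !mulr_ge0 ?addr_ge0.
- by rewrite invr_ge0 mulr_ge0 ?ltW.
- by rewrite ler_wpM2r //; nra.
- by rewrite lef_pV2 ?posrE ?mulr_gt0 // expr2 ler_pM // ltW.
Qed.

Lemma trmx_is_diag (V : nmodType) n (S : 'M[V]_n) : is_diag_mx S -> S^T = S.
Proof. by case/diag_mxP => d ->; rewrite tr_diag_mx. Qed.

Theorem lemma5 (R : realType) (m n r s : nat) (X Xh : 'M[R]_(m, n))
  (U : 'M[R]_(m, r)) (S : 'M[R]_r) (V : 'M[R]_(n, r))
  (Uh : 'M[R]_(m, s)) (Sh : 'M[R]_s) (Vh : 'M[R]_(n, s)) :
  is_svd X U S V -> is_svd Xh Uh Sh Vh ->
  specnorm X < 1 -> specnorm Xh < 1 ->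
  specnorm X ^+ 2 + 2 * specnorm (Xh - X) < 1 ->
  specnorm (U *m S *m invmx (1%:M - S *m S) *m V^T
            - Uh *m Sh *m invmx (1%:M - Sh *m Sh) *m Vh^T)
  <= 3 * specnorm (X - Xh) / (1 - specnorm X ^+ 2 - 2 * specnorm (Xh - X)) ^+ 2.
Proof.
move=> [UU VV S_diag _ defX] [UhUh VhVh Sh_diag _ defXh] X_lt1 Xh_lt1 small.
rewrite (svd_sv_transform UU VV (trmx_is_diag S_diag) defX X_lt1).
rewrite (svd_sv_transform UhUh VhVh (trmx_is_diag Sh_diag) defXh Xh_lt1).
rewrite (specnormB Xh X) in small *.
apply: le_trans (specnorm_sv_transformB X_lt1 Xh_lt1) _.
apply: perturbation_bound_arith; rewrite ?specnorm_ge0 //; last by lra.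
by rewrite -{1}(subKr X Xh) -(specnormN (X - Xh)) specnormD.
Qed.
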